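(* Let $l$ be a prime number and let $a,b,c\in\mathbb{Z}$ satisfy $\gcd(a,b)=1$ and $(a-b)^4+a^4+(a+b)^4=c^l$. Let $K=\mathbb{Q}(\sqrt{30})$ and let $E_1,E_2$ be the elliptic curves over $K$ $$E_1:\ y^2=x^3+60a\,x^2+30\big((15+3\sqrt{30})a^2+\sqrt{30}\,b^2\big)x,$$ $$E_2:\ y^2=x^3+40b\,x^2+20\big(\sqrt{30}\,a^2+(10+2\sqrt{30})b^2\big)x,$$ with $j$-invariants $j_1(a,b)=j(E_1)$ and $j_2(a,b)=j(E_2)$. Then $j_1(a,b)$ and $j_2(a,b)$ are not integral. Moreover, there exists a prime of $K$ of residue characteristic $>5$ at which both $j_1(a,b)$ and $j_2(a,b)$ are non-integral. *)

(* K = Q(sqrt 30) is realised inside the algebraic complex numbers algC. *)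
From mathcomp Require Import all_boot all_order all_algebra all_field.
Set Implicit Arguments. Unset Strict Implicit. Unset Printing Implicit Defensive.
Import Order.TTheory GRing.Theory Num.Theory.
Local Open Scope ring_scope.

Definition s30 : algC := sqrtC 30%:R.

Definition inK (x : algC) : Prop :=
  exists q1 q2 : rat, x = ratr q1 + ratr q2 * s30.

Definition inOK (x : algC) : Prop := inK x /\ x \in Aint.

Record prime_ideal_OK (P : algC -> Prop) : Prop := {
  pi_sub : forall x, P x -> inOK x;
  pi_0 : P 0;
  pi_add : forall x y, P x -> P y -> P (x + y);
  pi_mul : forall r x, inOK r -> P x -> P (r * x);
  pi_proper : ~ P 1;
  pi_prime : forall x y, inOK x -> inOK y -> P (x * y) -> P x \/ P y;
  pi_nonzero : exists x, P x /\ x != 0 }.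

(* x lies in the localisation (O_K)_P, i.e. v_P(x) >= 0 *)
Definition integral_at (P : algC -> Prop) (x : algC) : Prop :=
  exists al be : algC, [/\ inOK al, inOK be, ~ P be & x = al / be].

Definition residue_char (P : algC -> Prop) (p : nat) : Prop :=
  prime p /\ P p%:R.

Definition j_weierstrass (a1 a2 a3 a4 a6 : algC) : algC :=
  let b2 := a1 ^+ 2 + 4%:R * a2 in
  let b4 := 2%:R * a4 + a1 * a3 in
  let b6 := a3 ^+ 2 + 4%:R * a6 in
  let b8 := a1 ^+ 2 * a6 + 4%:R * a2 * a6 - a1 * a3 * a4 + a2 * a3 ^+ 2 - a4 ^+ 2 in
  let c4 := b2 ^+ 2 - 24%:R * b4 in
  let D := - b2 ^+ 2 * b8 - 8%:R * b4 ^+ 3 - 27%:R * b6 ^+ 2 + 9%:R * b2 * b4 * b6 in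
  c4 ^+ 3 / D.

Definition j1 (a b : int) : algC :=
  j_weierstrass 0 (60%:R * a%:~R) 0
    (30%:R * ((15%:R + 3%:R * s30) * a%:~R ^+ 2 + s30 * b%:~R ^+ 2)) 0.

Definition j2 (a b : int) : algC :=
  j_weierstrass 0 (40%:R * b%:~R) 0
    (20%:R * (s30 * a%:~R ^+ 2 + (10%:R + 2%:R * s30) * b%:~R ^+ 2)) 0.

(* The form (a - b)^4 + a^4 + (a + b)^4 = 3a^4 + 12a^2b^2 + 2b^4 is never divisible by
   4, 9 or 5 when gcd(a, b) = 1, so the perfect power c^l has a prime factor q > 5.
   Modulo q the form vanishes with a, b and 3a^2 + b^2 invertible, and
   r = -15a^2 / (3a^2 + b^2) is a square root of 30 in F_q; the kernel P of the reduction
   map sqrt 30 |-> r is a prime of K above q.  Modulo P the coefficient a4 of E1, resp. the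
   factor a2^2 - 4a4 of the discriminant of E2, vanishes while c4 does not, so both
   j-invariants have a pole at P; lying in K, they are not algebraic integers. *)

From mathcomp Require Import all_boot all_order all_algebra all_field.
From mathcomp Require Import ring zify.
Import Order.TTheory GRing.Theory Num.Theory.
Local Open Scope ring_scope.
Set Implicit Arguments. Unset Strict Implicit.

Lemma natr235_neq0 (F : fieldType) :
  (30%:R : F) != 0 -> [/\ (2%:R : F) != 0, (3%:R : F) != 0 & (5%:R : F) != 0].
Proof.
have D30 : (30%:R : F) = 2%:R * 3%:R * 5%:R by rewrite -!natrM.
by rewrite D30 !mulf_eq0 !negb_or => /andP[/andP[-> ->] ->].
Qed.

Definition quartic {R : pzRingType} (x y : R) : R :=
  3%:R * x ^+ 4 + 12%:R * x ^+ 2 * y ^+ 2 + 2%:R * y ^+ 4.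

Lemma sum_fourth_powers (R : comPzRingType) (a b : R) :
  (a - b) ^+ 4 + a ^+ 4 + (a + b) ^+ 4 = quartic a b.
Proof. by rewrite /quartic; ring. Qed.

Lemma quartic_intr (R : comPzRingType) (a b : int) :
  (quartic a b)%:~R = quartic (a%:~R : R) b%:~R.
Proof. by rewrite /quartic; ring. Qed.

Lemma quartic_root_coords_neq0 (F : fieldType) (x y : F) :
  (2%:R : F) != 0 -> (3%:R : F) != 0 -> quartic x y = 0 -> (x != 0) || (y != 0) ->
  x != 0 /\ y != 0.
Proof.
move=> F2 F3 V0 xy_neq0.
have x_neq0 : x != 0.
  apply: contraTneq xy_neq0 => x0; rewrite x0 eqxx /= negbK.
  have : 2%:R * y ^+ 4 = 0 by rewrite -V0 x0 /quartic; ring.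
  by move/eqP; rewrite mulf_eq0 (negPf F2) expf_eq0.
split=> //; apply: contraNneq x_neq0 => y0.
have : 3%:R * x ^+ 4 = 0 by rewrite -V0 y0 /quartic; ring.
by move/eqP; rewrite mulf_eq0 (negPf F3) expf_eq0.
Qed.

Lemma quartic_root_sqrt30 (F : fieldType) (x y : F) :
  (30%:R : F) != 0 -> quartic x y = 0 -> x != 0 ->
  exists r, [/\ r ^+ 2 = 30%:R, r * (3%:R * x ^+ 2 + y ^+ 2) = - (15%:R * x ^+ 2)
              & r * (x ^+ 2 + 2%:R * y ^+ 2) = 10%:R * y ^+ 2].
Proof.
move=> F30 V0 x_neq0; have [_ F3 F5] := natr235_neq0 F30.
set d := 3%:R * x ^+ 2 + y ^+ 2.
have d_neq0 : d != 0.
  apply: contraNneq x_neq0 => d0.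
  have : 3%:R * 5%:R * x ^+ 4 = 0.
    transitivity ((2%:R * y ^+ 2 + 6%:R * x ^+ 2) * d - quartic x y).
      by rewrite /d /quartic; ring.
    by rewrite d0 V0 mulr0 subr0.
  by move/eqP; rewrite mulf_eq0 mulf_eq0 (negPf F3) (negPf F5) expf_eq0.
exists (- (15%:R * x ^+ 2) / d); rewrite mulfVK //; split=> //.
- apply: (mulIf (expf_neq0 2 d_neq0)); rewrite -exprMn mulfVK //.
  transitivity (30%:R * d ^+ 2 - 15%:R * quartic x y); last by rewrite V0 mulr0 subr0.
  by rewrite /d /quartic; ring.
- apply: (mulIf d_neq0); rewrite mulrAC mulfVK //.
  transitivity (10%:R * y ^+ 2 * d - 5%:R * quartic x y); last by rewrite V0 mulr0 subr0.
  by rewrite /d /quartic; ring.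
Qed.

Lemma coprimez_prime_ndvd p a b : prime p -> gcdz a b = 1 -> ~~ ((p %| a) && (p %| b))%Z.
Proof. by move=> p_prime ab1; rewrite -dvdz_gcd ab1 dvdzE /= dvdn1 neq_ltn prime_gt1 ?orbT. Qed.

Lemma coprimez_intr_Fp p a b : prime p -> gcdz a b = 1 ->
  ((a%:~R : 'F_p) != 0) || ((b%:~R : 'F_p) != 0).
Proof.
move=> p_prime ab1; rewrite -!(dvdz_pcharf (pchar_Fp p_prime)) -negb_and.
exact: coprimez_prime_ndvd.
Qed.

Lemma dvdz_prime_pow4 p x : prime p -> (p %| x ^+ 4)%Z -> (p %| x)%Z.
Proof. by move=> p_prime; rewrite !dvdzE abszX Euclid_dvdX // => /andP[]. Qed.

Lemma quartic_not_dvd4 a b : gcdz a b = 1 -> ~~ (4 %| quartic a b)%Z.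
Proof.
move=> ab1; apply/negP => /dvdzP[M eqM].
have /dvdzP[a' Da] : (2 %| a)%Z.
  apply: (@dvdz_prime_pow4 2) => //; apply/dvdzP.
  by exists (2 * M - a ^+ 4 - 6 * a ^+ 2 * b ^+ 2 - b ^+ 4); move: eqM; rewrite /quartic; lia.
have b_even : (2 %| b)%Z.
  apply: (@dvdz_prime_pow4 2) => //; apply/dvdzP.
  by exists (M - 12 * a' ^+ 4 - 12 * a' ^+ 2 * b ^+ 2); move: eqM; rewrite /quartic Da; lia.
by move: (coprimez_prime_ndvd (isT : prime 2) ab1); rewrite Da dvdz_mull ?b_even.
Qed.

Lemma quartic_not_dvd9 a b : gcdz a b = 1 -> ~~ (9 %| quartic a b)%Z.
Proof.
move=> ab1; apply/negP => /dvdzP[M eqM].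
have /dvdzP[b' Db] : (3 %| b)%Z.
  apply: (@dvdz_prime_pow4 3) => //; apply/dvdzP.
  by exists (6 * M - 2 * a ^+ 4 - 8 * a ^+ 2 * b ^+ 2 - b ^+ 4); move: eqM; rewrite /quartic; lia.
have a_div3 : (3 %| a)%Z.
  apply: (@dvdz_prime_pow4 3) => //; apply/dvdzP.
  by exists (M - 12 * a ^+ 2 * b' ^+ 2 - 18 * b' ^+ 4); move: eqM; rewrite /quartic Db; lia.
by move: (coprimez_prime_ndvd (isT : prime 3) ab1); rewrite Db dvdz_mull ?a_div3.
Qed.

Lemma quartic_not_dvd5 a b : gcdz a b = 1 -> ~~ (5 %| quartic a b)%Z.
Proof.
move=> ab1; have ch5 : 5 \in [pchar 'F_5] := pchar_Fp (isT : prime 5).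
rewrite (dvdz_pcharf ch5) quartic_intr; apply/eqP => V0.
have [F2 F3] : (2%:R : 'F_5) != 0 /\ (3%:R : 'F_5) != 0 by rewrite -!(dvdn_pcharf ch5).
have [x_neq0 y_neq0] := quartic_root_coords_neq0 F2 F3 V0 (coprimez_intr_Fp (isT : prime 5) ab1).
have fermat (z : 'F_5) : z != 0 -> z ^+ 4 = 1.
  move=> z_neq0; have := expf_card z; rewrite card_Fp // => z5.
  by apply: (mulfI z_neq0); rewrite -exprS z5 mulr1.
have : 12%:R * (a%:~R * b%:~R) ^+ 2 = 0 :> 'F_5.
  transitivity (quartic (a%:~R : 'F_5) b%:~R - 5%:R).
    by rewrite /quartic (fermat _ x_neq0) (fermat _ y_neq0); ring.
  by rewrite V0 (pcharf0 ch5) subr0.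
by move/eqP; rewrite mulf_eq0 -(dvdn_pcharf ch5) expf_eq0 mulf_eq0 /= (negPf x_neq0) (negPf y_neq0).
Qed.

Lemma quartic_gt1 a b : gcdz a b = 1 -> 1 < quartic a b.
Proof.
move=> ab1; have : (a != 0) || (b != 0).
  by rewrite -negb_and; apply/negP => /andP[/eqP a0 /eqP b0]; move: ab1; rewrite a0 b0.
by rewrite /quartic !exprS !expr0 !mulr1 => /orP[] ?; nia.
Qed.

Lemma prime_dvd_gt5 l a b c q : prime l -> gcdz a b = 1 -> quartic a b = c ^+ l ->
  prime q -> (q %| c)%Z -> (5 < q)%N.
Proof.
move=> l_prime ab1 Vc q_prime q_dvd_c.
have sq_dvd : (q%:Z ^+ 2 %| quartic a b)%Z.
  by rewrite Vc -(subnK (prime_gt1 l_prime)) exprD dvdz_mull // dvdz_exp2r.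
have q_dvd : (q %| quartic a b)%Z by apply: dvdz_trans sq_dvd; rewrite expr2 dvdz_mulr.
have q_neq2 : q != 2 by apply: contraNneq (quartic_not_dvd4 ab1) => q2; rewrite q2 in sq_dvd.
have q_neq3 : q != 3 by apply: contraNneq (quartic_not_dvd9 ab1) => q3; rewrite q3 in sq_dvd.
have q_neq5 : q != 5 by apply: contraNneq (quartic_not_dvd5 ab1) => q5; rewrite q5 in q_dvd.
have q_neq4 : q != 4 by apply: contraTneq q_prime => ->.
have := prime_gt1 q_prime; lia.
Qed.

Lemma exists_prime_dvd_gt5 l a b c : prime l -> gcdz a b = 1 -> quartic a b = c ^+ l ->
  exists q, [/\ prime q, (5 < q)%N & (q %| c)%Z].
Proof.
move=> l_prime ab1 Vc; have c_gt1 : (1 < `|c|)%N.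
  rewrite ltnNge; apply/negP => c_le1.
  have : (`|c ^+ l| <= 1)%N by rewrite abszX -(exp1n l) leq_exp2r // prime_gt0.
  by rewrite -Vc; have := quartic_gt1 ab1; lia.
have q_dvd_c : (pdiv `|c| %| c)%Z by rewrite dvdzE pdiv_dvd.
by exists (pdiv `|c|); split; rewrite ?(prime_dvd_gt5 l_prime ab1 Vc) ?pdiv_prime.
Qed.

Lemma prime_gt5_ndvd30 q : prime q -> (5 < q)%N -> ~~ (q %| 30)%N.
Proof.
move=> q_prime; apply: contraL => q_dvd30.
have : q \in primes 30 by rewrite mem_primes q_prime q_dvd30.
by rewrite -leqNgt !inE => /or3P[] /eqP ->.
Qed.

Lemma s30_sqr : s30 ^+ 2 = 30%:R.
Proof. by rewrite /s30 sqrtCK. Qed.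

Lemma s30_Aint : s30 \in Aint.
Proof.
apply: (@root_monic_Aint ('X^2 - 30%:R%:P)).
- by rewrite /root !hornerE s30_sqr subrr.
- exact: monicXnsubC.
- by rewrite polyOverXnsubC ?rpred_nat.
Qed.

Lemma s30_irrational : s30 \notin Crat.
Proof.
apply/negP => /Cint_rat_Aint/(_ s30_Aint)/intrP[m Dm].
have : m ^+ 2 = 30 :> int by apply: (@intr_inj algC); rewrite rmorphXn /= -Dm s30_sqr.
have [] : `|m| <= 5 \/ 6 <= `|m| by lia.
all: nia.
Qed.

Lemma Crat_s30_eq0 x y : x \in Crat -> y \in Crat -> x + y * s30 = 0 -> x = 0 /\ y = 0.
Proof.
move=> Qx Qy xy0; have y0 : y = 0.
  apply: contraNeq s30_irrational => y_neq0.
  have ys : y * s30 = - x by apply/eqP; rewrite -addr_eq0 addrC xy0.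
  have -> : s30 = - x / y by rewrite -ys mulrC mulKf.
  by rewrite rpredM ?rpredN ?rpredV.
by move: xy0; rewrite y0 mul0r addr0.
Qed.

Lemma intr_s30_neq0 (U W : int) : W != 0 -> U%:~R + W%:~R * s30 != 0 :> algC.
Proof.
move=> W_neq0; apply/eqP => /Crat_s30_eq0[]; rewrite ?rpred_int // => _ /eqP.
by rewrite intr_eq0 (negPf W_neq0).
Qed.

Lemma intr_s30_inj (U W U' W' : int) :
  U%:~R + W%:~R * s30 = U'%:~R + W'%:~R * s30 :> algC -> U = U' /\ W = W'.
Proof.
move=> eqUW; have [] := @Crat_s30_eq0 (U - U')%:~R (W - W')%:~R.
- exact: rpred_int.
- exact: rpred_int.
- by rewrite !rmorphB /= mulrBl addrACA eqUW addrACA !subrr addr0.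
by move=> /eqP + /eqP; rewrite !intr_eq0 !subr_eq0 => /eqP -> /eqP ->.
Qed.

Lemma inK_ratr q : inK (ratr q).
Proof. by exists q, 0; rewrite rmorph0 mul0r addr0. Qed.

Lemma inK_nat n : inK n%:R.
Proof. by rewrite -ratr_nat; apply: inK_ratr. Qed.

Lemma inK_int z : inK z%:~R.
Proof. by rewrite -ratr_int; apply: inK_ratr. Qed.

Lemma inK_s30 : inK s30.
Proof. by exists 0, 1; rewrite rmorph0 rmorph1 add0r mul1r. Qed.

Lemma inK_add x y : inK x -> inK y -> inK (x + y).
Proof.
move=> [q1 [q2 ->]] [p1 [p2 ->]]; exists (q1 + p1), (q2 + p2).
by rewrite !rmorphD /=; ring.
Qed.

Lemma inK_opp x : inK x -> inK (- x).
Proof. by move=> [q1 [q2 ->]]; exists (- q1), (- q2); rewrite !rmorphN /=; ring. Qed.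

Lemma inK_mul x y : inK x -> inK y -> inK (x * y).
Proof.
move=> [q1 [q2 ->]] [p1 [p2 ->]].
exists (q1 * p1 + 30%:R * (q2 * p2)), (q1 * p2 + q2 * p1).
by rewrite !rmorphD !rmorphM /= rmorph_nat -s30_sqr; ring.
Qed.

Lemma inK_exp x n : inK x -> inK (x ^+ n).
Proof.
move=> Kx; elim: n => [|n IHn]; first exact: inK_nat 1.
by rewrite exprS; apply: inK_mul.
Qed.

#[local] Hint Resolve inK_ratr inK_nat inK_int inK_s30 inK_add inK_opp inK_mul inK_exp : core.

Lemma inK_inv x : inK x -> inK x^-1.
Proof.
case=> q1 [q2 Dx]; pose x' := ratr q1 - ratr q2 * s30.
have Dxx' : x * x' = ratr (q1 ^+ 2 - 30%:R * q2 ^+ 2).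
  by rewrite Dx /x' rmorphB !rmorphXn rmorphM rmorph_nat -s30_sqr /=; ring.
have [x'0 | x'_neq0] := eqVneq x' 0.
  have := @Crat_s30_eq0 (ratr q1) (- ratr q2).
  rewrite mulNr rpredN !Crat_rat => /(_ isT isT x'0) [q1_0 q2_0].
  by rewrite Dx q1_0 -[ratr q2]opprK q2_0 oppr0 mul0r addr0 invr0; apply: inK_nat 0.
have -> : x^-1 = x' * (ratr (q1 ^+ 2 - 30%:R * q2 ^+ 2))^-1.
  by rewrite -Dxx' invfM mulrCA mulfV ?mulr1.
by rewrite /x' -fmorphV /=; auto.
Qed.

#[local] Hint Resolve inK_inv : core.

Lemma root_size2_Crat (p : {poly rat}) x : size p = 2 -> root (map_poly ratr p) x -> x \in Crat.
Proof.
move=> size_p; rewrite /root horner_coef size_map_poly size_p.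
rewrite !big_ord_recl big_ord0 !coef_map /= expr0 expr1 mulr1 addr0 => /eqP px0.
have p1_neq0 : p`_1 != 0.
  have <- : lead_coef p = p`_1 by rewrite lead_coefE size_p.
  by rewrite lead_coef_eq0 -size_poly_eq0 size_p.
have -> : x = - ratr p`_0 / ratr p`_1.
  have p1x : ratr p`_1 * x = - ratr p`_0 by apply/eqP; rewrite -addr_eq0 addrC px0.
  by rewrite -p1x mulrC mulKf ?fmorph_eq0.
by rewrite rpredM ?rpredN ?rpredV ?Crat_rat.
Qed.

Lemma Aint_quadratic_trace (x : algC) (u v : rat) : x \in Aint -> x \notin Crat ->
  x ^+ 2 - ratr u * x + ratr v = 0 -> ratr u \in (Num.int : {pred algC}).
Proof.
move=> Ax Qx root_x.
have [p [Dp p_monic] p_min] := minCpolyP x.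
pose g := ('X - u%:P) * 'X + v%:P.
have size_g : size g = 3 by rewrite size_MXaddC -size_poly_eq0 size_XsubC.
have g_monic : g \is monic.
  have size_X2 : size (('X - u%:P) * 'X) = 3.
    by rewrite size_mulX ?size_XsubC // -size_poly_eq0 size_XsubC.
  rewrite monicE lead_coefDl; last by rewrite size_X2 (leq_ltn_trans (size_polyC_leq1 v)).
  by rewrite lead_coef_Mmonic ?monicX // lead_coefXsubC.
have p_dvd_g : p %| g.
  rewrite -p_min /root /g !(rmorphD, rmorphM, rmorphB, rmorphN) /= map_polyX !map_polyC !hornerE.
  by rewrite -root_x; apply/eqP; ring.
have size_p : size p = 3.
  have : (1 < size p)%N by rewrite -(size_map_poly (@ratr algC)) -Dp size_minCpoly.
  have : (size p <= size g)%N by rewrite dvdp_leq // -size_poly_eq0 size_g.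
  have : size p != 2%N.
    by apply: contraNneq Qx => /root_size2_Crat; apply; rewrite -Dp root_minCpoly.
  lia.
have Dg : p = g by apply/eqP; rewrite -eqp_monic // -dvdp_size_eqp // size_p size_g.
have /polyOverP/(_ 1) : minCpoly x \is a polyOver Num.int := Ax.
by rewrite Dp Dg coef_map /g !coefE /= sub0r addr0 rmorphN rpredN.
Qed.

Lemma inOK_s30_coords x : inOK x -> exists U W : int, 60%:R * x = U%:~R + W%:~R * s30.
Proof.
case=> [[q1 [q2 Dx]] Ax].
(* [2 q1] is the trace of [x]; with [x' = 2 q1 - x] its conjugate, [60 q2 = (x - x') s30]. *)
have trace_int : (ratr (2%:R * q1) : algC) \in Num.int.
  have [q2_0 | q2_neq0] := eqVneq q2 0.
    have : x \in Num.int by rewrite Cint_rat_Aint // Dx q2_0 rmorph0 mul0r addr0 Crat_rat.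
    by rewrite Dx q2_0 rmorph0 mul0r addr0 => Zq1; rewrite rmorphM rmorph_nat rpredM ?rpred_nat.
  apply: (@Aint_quadratic_trace x _ (q1 ^+ 2 - 30%:R * q2 ^+ 2) Ax).
    apply: contraNN s30_irrational => Qx.
    have -> : s30 = (x - ratr q1) / ratr q2 by rewrite Dx addrC addKr mulrC mulKf ?fmorph_eq0.
    by rewrite rpredM ?rpredB ?rpredV ?Crat_rat.
  by rewrite Dx rmorphB !rmorphXn !rmorphM !rmorph_nat -s30_sqr /=; ring.
have s30_coord_int : (ratr (60%:R * q2) : algC) \in Num.int.
  apply: Cint_rat_Aint; first exact: Crat_rat.
  have -> : ratr (60%:R * q2) = (x - (ratr (2%:R * q1) - x)) * s30.
    rewrite Dx !rmorphM !rmorph_nat /=; transitivity (2%:R * ratr q2 * s30 ^+ 2).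
      by rewrite s30_sqr; ring.
    by ring.
  by rewrite rpredM ?s30_Aint ?rpredB ?Ax ?Aint_Cint.
have [/intrP[u Du] /intrP[w Dw]] := (trace_int, s30_coord_int).
exists (30 * u), w; rewrite rmorphM /= -Du -Dw Dx !rmorphM !rmorph_nat /=; ring.
Qed.

Lemma j_weierstrass_short A B : j_weierstrass 0 A 0 B 0 =
  (16%:R * A ^+ 2 - 48%:R * B) ^+ 3 / (16%:R * B ^+ 2 * (A ^+ 2 - 4%:R * B)).
Proof. by rewrite /j_weierstrass; congr (_ / _); ring. Qed.


Lemma inK_j_short A B : inK A -> inK B -> inK (j_weierstrass 0 A 0 B 0).
Proof. by move=> KA KB; rewrite j_weierstrass_short; auto 7. Qed.

Lemma inK_j1 a b : inK (j1 a b).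
Proof. by apply: inK_j_short; auto 8. Qed.

Lemma inK_j2 a b : inK (j2 a b).
Proof. by apply: inK_j_short; auto 8. Qed.

Lemma integral_at_Aint P x : prime_ideal_OK P -> inK x -> x \in Aint -> integral_at P x.
Proof.
move=> P_prime Kx Ax; exists x, 1; split=> //; last by rewrite divr1.
  by split=> //; apply: inK_nat 1.
exact: pi_proper P_prime.
Qed.

Section Reduction.

Variables (F : fieldType) (r : F).
Hypotheses (r_sqr : r ^+ 2 = 30%:R) (F30 : (30%:R : F) != 0).

(* [x] lies in the localisation of [Z[s30]] at the kernel of [s30 |-> r], and maps to [t]. *)
Definition reduces_to (x : algC) (t : F) := exists D U W : int,
  [/\ D%:~R != 0 :> F, D%:~R * x = U%:~R + W%:~R * s30 & t * D%:~R = U%:~R + W%:~R * r].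

Lemma reduces_to_uniq x t t' : reduces_to x t -> reduces_to x t' -> t = t'.
Proof.
move=> [D [U [W [D_neq0 Dx Dt]]]] [D' [U' [W' [D'_neq0 D'x D't]]]].
have [eqU eqW] : D' * U = D * U' /\ D' * W = D * W'.
  apply: intr_s30_inj; rewrite !rmorphM /=.
  transitivity (D'%:~R * (D%:~R * x)); first by rewrite Dx; ring.
  by rewrite mulrCA D'x; ring.
have Et : t * (D%:~R * D'%:~R) = (D' * U)%:~R + (D' * W)%:~R * r.
  by rewrite !rmorphM /= mulrA Dt; ring.
have Et' : t' * (D%:~R * D'%:~R) = (D * U')%:~R + (D * W')%:~R * r.
  by rewrite !rmorphM /= [_ * D'%:~R]mulrC mulrA D't; ring.
by apply: (mulIf (mulf_neq0 D_neq0 D'_neq0)); rewrite Et Et' eqU eqW.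
Qed.

Lemma reduces_to_int z : reduces_to z%:~R z%:~R.
Proof. by exists 1, z, 0; split; rewrite ?oner_eq0 //; ring. Qed.

Lemma reduces_to_nat n : reduces_to n%:R n%:R.
Proof. exact: reduces_to_int n. Qed.

Lemma reduces_to_s30 : reduces_to s30 r.
Proof. by exists 1, 0, 1; split; rewrite ?oner_eq0 //; ring. Qed.

Lemma reduces_to_add x y t u : reduces_to x t -> reduces_to y u -> reduces_to (x + y) (t + u).
Proof.
move=> [D [U [W [D_neq0 Dx Dt]]]] [D' [U' [W' [D'_neq0 D'y D'u]]]].
exists (D * D'), (D' * U + D * U'), (D' * W + D * W'); split.
- by rewrite rmorphM mulf_neq0.
- transitivity (D'%:~R * (D%:~R * x) + D%:~R * (D'%:~R * y) : algC); first by rewrite rmorphM; ring.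
  by rewrite Dx D'y !rmorphD !rmorphM; ring.
- transitivity (D'%:~R * (t * D%:~R) + D%:~R * (u * D'%:~R)); first by rewrite rmorphM; ring.
  by rewrite Dt D'u !rmorphD !rmorphM; ring.
Qed.

Lemma reduces_to_opp x t : reduces_to x t -> reduces_to (- x) (- t).
Proof.
move=> [D [U [W [D_neq0 Dx Dt]]]]; exists D, (- U), (- W); split=> //.
- by rewrite mulrN Dx !rmorphN /=; ring.
- by rewrite mulNr Dt !rmorphN /=; ring.
Qed.

Lemma reduces_to_mul x y t u : reduces_to x t -> reduces_to y u -> reduces_to (x * y) (t * u).
Proof.
move=> [D [U [W [D_neq0 Dx Dt]]]] [D' [U' [W' [D'_neq0 D'y D'u]]]].
exists (D * D'), (U * U' + 30 * W * W'), (U * W' + W * U'); split.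
- by rewrite rmorphM mulf_neq0.
- transitivity ((D%:~R * x) * (D'%:~R * y) : algC); first by rewrite rmorphM; ring.
  by rewrite Dx D'y !rmorphD !rmorphM /= -[30%:~R]/(30%:R : algC) -s30_sqr; ring.
- transitivity ((t * D%:~R) * (u * D'%:~R)); first by rewrite rmorphM; ring.
  by rewrite Dt D'u !rmorphD !rmorphM /= -[30%:~R]/(30%:R : F) -r_sqr; ring.
Qed.

Lemma reduces_to_exp x t n : reduces_to x t -> reduces_to (x ^+ n) (t ^+ n).
Proof.
move=> xt; elim: n => [|n IHn]; first exact: reduces_to_nat 1.
by rewrite !exprS; apply: reduces_to_mul.
Qed.

#[local] Hint Resolve reduces_to_int reduces_to_nat reduces_to_s30 reduces_to_add
  reduces_to_opp reduces_to_mul reduces_to_exp : core.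

Lemma inOK_reduces x : inOK x -> exists t, reduces_to x t.
Proof.
have [F2 _ _] := natr235_neq0 F30.
have F60 : (60%:R : F) != 0 by rewrite (natrM F 2 30) mulf_neq0.
case/inOK_s30_coords=> U [W DUW].
by exists ((U%:~R + W%:~R * r) / 60%:R), 60, U, W; split; rewrite ?mulfVK.
Qed.

Definition reduction_ker (x : algC) : Prop := inOK x /\ reduces_to x 0.

Lemma reduction_ker_nat n : (n%:R : F) = 0 -> reduction_ker n%:R.
Proof. by move=> n0; split; [split; [apply: inK_nat | apply: rpred_nat] | rewrite -n0]. Qed.

Lemma reduction_ker_prime p : p \in [pchar F] -> prime_ideal_OK reduction_ker.
Proof.
move=> pcharFp; split.
- by move=> x [].
- by apply: (@reduction_ker_nat 0).
- move=> x y [[Kx Ax] x0] [[Ky Ay] y0]; split; first by split; [apply: inK_add | apply: rpredD].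
  by rewrite -(addr0 0); apply: reduces_to_add.
- move=> s x OKs [[Kx Ax] x0]; have [[Ks As] [t st]] := (OKs, inOK_reduces OKs).
  split; first by split; [apply: inK_mul | apply: rpredM].
  by rewrite -(mulr0 t); apply: reduces_to_mul.
- by case=> _ /(reduces_to_uniq (reduces_to_nat 1)) /eqP; rewrite oner_eq0.
- move=> x y OKx OKy [_ xy0].
  have [[t xt] [u yu]] := (inOK_reduces OKx, inOK_reduces OKy).
  have /eqP := reduces_to_uniq (reduces_to_mul xt yu) xy0.
  rewrite mulf_eq0 => /orP[/eqP t0 | /eqP u0].
    by left; split; rewrite -?t0.
  by right; split; rewrite -?u0.
- exists p%:R; split; first exact/reduction_ker_nat/(pcharf0 pcharFp).
  by rewrite pnatr_eq0 -lt0n prime_gt0 // (pcharf_prime pcharFp).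
Qed.

Lemma reduction_ker_residue_char p : p \in [pchar F] -> residue_char reduction_ker p.
Proof.
by move=> pcharFp; split; [apply: pcharf_prime pcharFp | apply/reduction_ker_nat/pcharf0].
Qed.

Lemma not_integral_at_ratio N D tN : reduces_to N tN -> reduces_to D 0 -> tN != 0 ->
  D != 0 -> ~ integral_at reduction_ker (N / D).
Proof.
move=> Nt D0 tN_neq0 D_neq0 [al [be [OKal OKbe be_notin eq_ratio]]].
have be_neq0 : be != 0 by apply: contra_not_neq be_notin => ->; apply: (@reduction_ker_nat 0).
have eq_cross : al * D = N * be.
  by rewrite -[al](mulfVK be_neq0) -eq_ratio mulrAC divfK.
have [[a al_a] [b be_b]] := (inOK_reduces OKal, inOK_reduces OKbe).
have := reduces_to_mul al_a D0; rewrite eq_cross => /(reduces_to_uniq (reduces_to_mul Nt be_b)).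
rewrite mulr0 => /eqP; rewrite mulf_eq0 (negPf tN_neq0) /= => /eqP b0.
by apply: be_notin; split; last by rewrite -b0.
Qed.

Lemma j_short_not_integral A B tA tB :
  reduces_to A tA -> reduces_to B tB -> B != 0 -> A ^+ 2 - 4%:R * B != 0 ->
  tB * (tA ^+ 2 - 4%:R * tB) = 0 -> 16%:R * tA ^+ 2 - 48%:R * tB != 0 ->
  ~ integral_at reduction_ker (j_weierstrass 0 A 0 B 0).
Proof.
move=> At Bt B_neq0 disc_neq0 tdisc0 tc4_neq0; rewrite j_weierstrass_short.
apply: (@not_integral_at_ratio _ _ ((16%:R * tA ^+ 2 - 48%:R * tB) ^+ 3)).
- by auto.
- have -> : 0 = 16%:R * tB ^+ 2 * (tA ^+ 2 - 4%:R * tB) :> F.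
    by rewrite exprS -!mulrA tdisc0 !mulr0.
  by auto.
- by rewrite expf_neq0.
- by rewrite !mulf_neq0 ?expf_neq0 // pnatr_eq0.
Qed.

Lemma j1_not_integral a b : (a%:~R : F) != 0 ->
  r * (3%:R * a%:~R ^+ 2 + b%:~R ^+ 2) = - (15%:R * a%:~R ^+ 2) ->
  ~ integral_at reduction_ker (j1 a b).
Proof.
move=> a_neq0 r_eq; have [F2 F3 F5] := natr235_neq0 F30.
have ab_neq0 : 3 * a ^+ 2 + b ^+ 2 != 0.
  have : a != 0 by apply: contraNneq a_neq0 => ->.
  by nia.
pose tB := 30%:R * ((15%:R + 3%:R * r) * a%:~R ^+ 2 + r * b%:~R ^+ 2) : F.
have tB0 : tB = 0.
  by rewrite -(mulr0 30%:R) -(addrN (15%:R * a%:~R ^+ 2)) -r_eq /tB; ring.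
apply: (@j_short_not_integral _ _ (60%:R * a%:~R) tB _ _ _ _ _); first by auto.
- by rewrite /tB; auto 8.
- have -> : 30%:R * ((15%:R + 3%:R * s30) * a%:~R ^+ 2 + s30 * b%:~R ^+ 2) =
      (450 * a ^+ 2)%:~R + (30 * (3 * a ^+ 2 + b ^+ 2))%:~R * s30 :> algC by ring.
  by rewrite intr_s30_neq0 // mulf_neq0.
- have -> : (60%:R * a%:~R) ^+ 2 -
      4%:R * (30%:R * ((15%:R + 3%:R * s30) * a%:~R ^+ 2 + s30 * b%:~R ^+ 2)) =
      (1800 * a ^+ 2)%:~R + (- 120 * (3 * a ^+ 2 + b ^+ 2))%:~R * s30 :> algC by ring.
  by rewrite intr_s30_neq0 // mulf_neq0.
- by rewrite tB0 mul0r.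
- rewrite tB0 mulr0 subr0.
  have -> : 16%:R * (60%:R * a%:~R) ^+ 2 = 2%:R ^+ 8 * 3%:R ^+ 2 * 5%:R ^+ 2 * a%:~R ^+ 2 :> F.
    by ring.
  by rewrite !mulf_neq0 ?expf_neq0.
Qed.

Lemma j2_not_integral a b : (b%:~R : F) != 0 ->
  r * (a%:~R ^+ 2 + 2%:R * b%:~R ^+ 2) = 10%:R * b%:~R ^+ 2 ->
  ~ integral_at reduction_ker (j2 a b).
Proof.
move=> b_neq0 r_eq; have [F2 _ F5] := natr235_neq0 F30.
have ab_neq0 : a ^+ 2 + 2 * b ^+ 2 != 0.
  have : b != 0 by apply: contraNneq b_neq0 => ->.
  by nia.
pose tB := 20%:R * (r * a%:~R ^+ 2 + (10%:R + 2%:R * r) * b%:~R ^+ 2) : F.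
have tdisc0 : (40%:R * b%:~R) ^+ 2 - 4%:R * tB = 0.
  transitivity (800%:R * b%:~R ^+ 2 - 80%:R * (r * (a%:~R ^+ 2 + 2%:R * b%:~R ^+ 2)) : F).
    by rewrite /tB; ring.
  by rewrite r_eq; ring.
apply: (@j_short_not_integral _ _ (40%:R * b%:~R) tB _ _ _ _ _); first by auto.
- by rewrite /tB; auto 8.
- have -> : 20%:R * (s30 * a%:~R ^+ 2 + (10%:R + 2%:R * s30) * b%:~R ^+ 2) =
      (200 * b ^+ 2)%:~R + (20 * (a ^+ 2 + 2 * b ^+ 2))%:~R * s30 :> algC by ring.
  by rewrite intr_s30_neq0 // mulf_neq0.
- have -> : (40%:R * b%:~R) ^+ 2 -
      4%:R * (20%:R * (s30 * a%:~R ^+ 2 + (10%:R + 2%:R * s30) * b%:~R ^+ 2)) =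
      (800 * b ^+ 2)%:~R + (- 80 * (a ^+ 2 + 2 * b ^+ 2))%:~R * s30 :> algC by ring.
  by rewrite intr_s30_neq0 // mulf_neq0.
- by rewrite tdisc0 mulr0.
- have -> : 16%:R * (40%:R * b%:~R) ^+ 2 - 48%:R * tB =
      2%:R ^+ 8 * 5%:R ^+ 2 * b%:~R ^+ 2 + 12%:R * ((40%:R * b%:~R) ^+ 2 - 4%:R * tB) by ring.
  by rewrite tdisc0 mulr0 addr0 !mulf_neq0 ?expf_neq0.
Qed.

End Reduction.

Theorem lemma4p1 (l : nat) (a b c : int) :
  prime l ->
  gcdz a b = 1 ->
  (a - b) ^+ 4 + a ^+ 4 + (a + b) ^+ 4 = c ^+ l ->
  [/\ j1 a b \notin Aint, j2 a b \notin Aint &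
      exists (P : algC -> Prop) (p : nat),
        [/\ prime_ideal_OK P, residue_char P p, (5 < p)%N,
            ~ integral_at P (j1 a b) & ~ integral_at P (j2 a b)]].
Proof.
rewrite sum_fourth_powers => l_prime ab1 Vc.
have [q [q_prime q_gt5 q_dvd_c]] := exists_prime_dvd_gt5 l_prime ab1 Vc.
have pchar_q := pchar_Fp q_prime.
have F30 : (30%:R : 'F_q) != 0 by rewrite -(dvdn_pcharf pchar_q) prime_gt5_ndvd30.
have [F2 F3 _] := natr235_neq0 F30.
have V0 : quartic (a%:~R : 'F_q) b%:~R = 0.
  apply/eqP; rewrite -quartic_intr -(dvdz_pcharf pchar_q) Vc.
  by rewrite dvdz_exp ?prime_gt0.
have [a_neq0 b_neq0] := quartic_root_coords_neq0 F2 F3 V0 (coprimez_intr_Fp q_prime ab1).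
have [r [r_sqr r_eq1 r_eq2]] := quartic_root_sqrt30 F30 V0 a_neq0.
have P_prime := reduction_ker_prime r_sqr F30 pchar_q.
have j1_not_int := j1_not_integral r_sqr F30 a_neq0 r_eq1.
have j2_not_int := j2_not_integral r_sqr F30 b_neq0 r_eq2.
split.
- by apply/negP => /(integral_at_Aint P_prime (inK_j1 a b)).
- by apply/negP => /(integral_at_Aint P_prime (inK_j2 a b)).
- exists (reduction_ker r), q; split=> //.
  exact: reduction_ker_residue_char pchar_q.
Qed.
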